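(* Let $T\ge 5$ and let $q$ be an integer with $5\le q\le T$. Let $G=(V,E)$ be a finite connected undirected graph with diameter $D$. Consider any execution of Algorithm FS in which the checkpoint set $\mathit{CP}$ is replaced by $\mathit{CP}_q=\{c\in\mathbb{N}_0 : c\equiv 0 \pmod q \text{ and } T-c>q-1\}$, under arbitrary adversarial activations, with rounds numbered so that round $0$ is the first round at whose beginning some node is active. Then for every round $t\ge qD+\bigl\lfloor \frac{D}{\lfloor T/q\rfloor}\bigr\rfloor\cdot(T\bmod q)$, all nodes are active and have equal clock values $\delta_t(v)$.
   Context: Model (beeping model with arbitrary activations). $G=(V,E)$ is a finite connected undirected graph; $N(v)$ is the set of neighbors of $v$. Time proceeds in synchronous rounds. In each round, each active node either beeps or listens; a listening node learns only whether at least one of its neighbors beeped in that round. Algorithm FS (with checkpoint set $C$). Each node $v$ stores $\delta(v)\in\{0,\dots,T-1\}$, $\mathit{State}(v)\in\{\mathit{Inactive},\mathit{Beep},\mathit{Listen}\}$, $\mathit{Induced}(v)\in\{\mathit{true},\mathit{false}\}$. Initially all nodes are Inactive. A node $v$ is activated in round $t$ if the adversary activates it in round $t$, or $v$ is inactive and some neighbor beeps in round $t-1$; then at the beginning of round $t$, $\delta(v)=1$, $\mathit{State}(v)=\mathit{Beep}$, $\mathit{Induced}(v)=\mathit{true}$. In each round each active node $v$, according to its state at the beginning of the round: (1) if $\mathit{State}(v)=\mathit{Beep}$: beeps; $\delta(v)\gets\delta(v)+1\bmod T$; $\mathit{State}(v)\gets\mathit{Listen}$; (2) if $\mathit{State}(v)=\mathit{Listen}$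 and some neighbor beeps: if $\delta(v)\equiv c-1\pmod T$ for some $c\in C$, then $\delta(v)\gets\delta(v)+2\bmod T$, $\mathit{State}(v)\gets\mathit{Beep}$, $\mathit{Induced}(v)\gets\mathit{true}$; else $\delta(v)\gets\delta(v)+1\bmod T$; (3) if $\mathit{State}(v)=\mathit{Listen}$ and no neighbor beeps: $\delta(v)\gets\delta(v)+1\bmod T$; then if ($\mathit{Induced}(v)=\mathit{true}$ and new $\delta(v)\in C$) or new $\delta(v)=0$: $\mathit{State}(v)\gets\mathit{Beep}$, $\mathit{Induced}(v)\gets\mathit{false}$. $\delta_t(v)$ denotes the value at the beginning of round $t$. *)

From mathcomp Require Import all_boot.
Set Implicit Arguments. Unset Strict Implicit. Unset Printing Implicit Defensive.

Definition simple_graph (V : finType) (e : rel V) : Prop :=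
  symmetric e /\ irreflexive e.

Definition within (V : finType) (e : rel V) (k : nat) (u v : V) : Prop :=
  exists p : seq V, [/\ path e u p, last u p = v & size p <= k].

Definition is_diameter (V : finType) (e : rel V) (D : nat) : Prop :=
  (forall u v : V, within e D u v) /\
  (0 < D -> exists u v : V, ~ within e D.-1 u v).

Inductive phase := Beep | Listen.

Inductive nstate :=
  | Inactive
  | Active (delta : nat) (st : phase) (induced : bool).

Definition beeps (s : nstate) : bool :=
  if s is Active _ Beep _ then true else false.

Definition fs_step (T : nat) (C : pred nat) (s : nstate) (heard : bool) : nstate :=
  match s with
  | Inactive => Inactive
  | Active d Beep ind => Active (d.+1 %% T) Listen ind
  | Active d Listen ind =>
      if heard then
        (* delta = c - 1 (mod T) for some c in C  <=>  delta + 1 = c (mod T) *)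
        if [exists c : 'I_T, C c && (d.+1 %% T == c %% T)]
        then Active (d.+2 %% T) Beep true
        else Active (d.+1 %% T) Listen ind
      else
        let d' := d.+1 %% T in
        if (ind && C d') || (d' == 0) then Active d' Beep false
        else Active d' Listen ind
  end.

(* Configuration at the beginning of round t (after activations of round t).
   adv t v : the adversary activates v in round t (only effective if v is
   inactive). Round 0 is the first round. *)
Fixpoint fs_conf (V : finType) (e : rel V) (T : nat) (C : pred nat)
    (adv : nat -> V -> bool) (t : nat) : V -> nstate :=
  match t with
  | 0 => fun v => if adv 0 v then Active 1 Beep true else Inactive
  | t'.+1 =>
      let prev := fs_conf e T C adv t' in
      fun v =>
        let heard := [exists u, e v u && beeps (prev u)] in
        match prev v with
        | Inactive =>
            if adv t v || heard then Active 1 Beep true else Inactive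
        | s => fs_step T C s heard
        end
  end.

Definition clock (s : nstate) : option nat :=
  if s is Active d _ _ then Some d else None.

(* Modified checkpoint set CP_q = { c in N_0 : c = 0 mod q and T - c > q - 1 }
   (T - c > q - 1 is read over the integers, i.e. c + q - 1 < T). *)
Definition CPq (T q : nat) : pred nat :=
  fun c => (c %% q == 0) && (c + (q - 1) < T).

From mathcomp Require Import all_boot zify.
Set Implicit Arguments. Unset Strict Implicit. Unset Printing Implicit Defensive.

(* We replace every clock delta(v) by an unbounded counter K(v), the clock
   being K(v) mod T ([lconf], [conf_proj]).  A node activated in round 0 has
   counter t + 1 in round t and serves as a reference clock.  The core of the
   proof is an inductive invariant of the lifted execution ([invariant]): no
   counter exceeds t + 1, neighbours of inactive nodes are fresh, a node is at
   most one step ahead of a neighbour (two steps only while beeping just past a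
   checkpoint), idle listeners are not ahead, and a node one step ahead at a
   checkpoint beeps.  Its preservation rests on the checkpoints being q >= 4
   apart ([cp_gap]).  A wave argument ([wave_progress]) then shows that a node
   at distance d <= D from the reference node has lag at most d - k behind it
   from round wave_time k + (d - k) on, where wave_time k = k q +
   floor(k / floor(T/q)) (T mod q) is a checkpoint modulo T.  For k = d = D all
   clocks equal (t + 1) mod T. *)

Section Checkpoints.
Variables T q : nat.
Local Notation C := (CPq T q).

Lemma cp0 : 0 < q <= T -> C 0.
Proof. by move=> hqT; rewrite /CPq mod0n eqxx /=; lia. Qed.

Lemma cp_gap a j : C (a %% T) -> C ((a + j) %% T) -> 0 < j < q -> False.
Proof.
move=> Ca Caj hj.
have Ea : a %% T + j < T by move: Ca; rewrite /CPq => /andP[_]; lia.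
move: Caj; rewrite -modnDml modn_small // /CPq => /andP[/eqP Caj _].
move: Ca; rewrite /CPq => /andP[/eqP Ca _].
have Da : q %| a %% T by apply/eqP.
have : q %| j by rewrite -(dvdn_addr j Da); apply/eqP.
by move/dvdn_leq; lia.
Qed.

Lemma cp_beep_gap K j : 0 < j -> j.+1 < q ->
  C (K %% T) \/ C (K.-1 %% T) -> C ((K + j) %% T) -> False.
Proof.
move=> j0 jq [H|H] H'; first by apply: (cp_gap H H'); lia.
case: K H H' => [|K] H H'; first by apply: (cp_gap H H'); lia.
by apply: (@cp_gap K j.+1 H); [rewrite -addSnnS | lia].
Qed.

(* [wave_time k] is the round by which the synchronisation wave has crossed k
   edges: k phases of q rounds, plus T mod q rounds each time T/q phases have
   filled a whole clock period. *)
Definition wave_time k := k * q + (k %/ (T %/ q)) * (T %% q).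

Lemma wave_time0 : wave_time 0 = 0.
Proof. by rewrite /wave_time div0n. Qed.

Lemma wave_time_gt k : 1 < q -> 0 < k -> k < wave_time k.
Proof.
move=> hq k0; have := leq_mul (leqnn k) hq; rewrite /wave_time.
move: (k %/ _ * _) (k * q) => X Y; lia.
Qed.

Lemma wave_time_step k : 1 < q -> wave_time k + 2 <= wave_time k.+1.
Proof.
move=> hq; rewrite /wave_time.
have : k %/ (T %/ q) <= k.+1 %/ (T %/ q) by apply: leq_div2r.
move/(leq_mul (leqnn (T %% q))) => h.
rewrite mulSn [k.+1 %/ _ * _]mulnC [k %/ _ * _]mulnC; lia.
Qed.

(* Writing k = a (T/q) + b with b < T/q, wave_time k = a T + b q, whose residue
   b q is a checkpoint. *)
Lemma wave_time_cp k : 0 < q <= T -> C (wave_time k %% T).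
Proof.
move=> hqT; set m := T %/ q; set r := T %% q.
have m0 : 0 < m by rewrite divn_gt0; lia.
set a := k %/ m; set b := k %% m.
have Ek : k = a * m + b by rewrite /a /b -divn_eq.
have ET : T = m * q + r by rewrite /m /r -divn_eq.
have -> : wave_time k = a * T + b * q by rewrite /wave_time -/m -/r -/a {1}Ek ET; nia.
have bq : b * q + q <= T.
  have bm : b < m by rewrite /b ltn_pmod.
  by have := leq_mul bm (leqnn q); rewrite ET; lia.
rewrite modnMDl modn_small; last lia.
by rewrite /CPq modnMl eqxx /=; lia.
Qed.

End Checkpoints.

Lemma within_step (V : finType) (e : rel V) d a v : within e d a v ->
  v = a \/ exists2 u, e u v & within e d.-1 a u /\ 0 < d.
Proof.
case=> p [Hp Hl Hs]; case/lastP: p Hp Hl Hs => [|p x] Hp Hl Hs; first by left.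
rewrite last_rcons in Hl; subst x; rewrite size_rcons in Hs.
move: Hp; rewrite rcons_path => /andP[Hp euv].
by right; exists (last a p) => //; split=> //; [exists p; split=> //; lia | lia].
Qed.

Inductive lstate := LInactive | LActive (K : nat) (st : phase) (ind : bool).

Definition lbeeps (s : lstate) : bool :=
  if s is LActive _ Beep _ then true else false.

Definition proj (T : nat) (s : lstate) : nstate :=
  if s is LActive K st ind then Active (K %% T) st ind else Inactive.

Section Execution.
Variables (T q : nat) (V : finType) (e : rel V) (adv : nat -> V -> bool).
Hypotheses (hq : 3 < q) (hqT : q <= T) (esym : symmetric e).
Local Notation C := (CPq T q).

Definition lstep (s : lstate) (h : bool) : lstate :=
  match s with
  | LInactive => LInactive
  | LActive K Beep ind => LActive K.+1 Listen ind
  | LActive K Listen ind =>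
     if h then (if C (K.+1 %% T) then LActive K.+2 Beep true else LActive K.+1 Listen ind)
     else if (ind && C (K.+1 %% T)) || (K.+1 %% T == 0) then LActive K.+1 Beep false
     else LActive K.+1 Listen ind
  end.

Fixpoint lconf (t : nat) : V -> lstate :=
  match t with
  | 0 => fun v => if adv 0 v then LActive 1 Beep true else LInactive
  | t'.+1 => fun v =>
      let h := [exists u, e v u && lbeeps (lconf t' u)] in
      match lconf t' v with
      | LInactive => if adv t'.+1 v || h then LActive 1 Beep true else LInactive
      | s => lstep s h
      end
  end.

Definition heard t v := [exists u, e v u && lbeeps (lconf t u)].

Lemma lconfS t v : lconf t.+1 v =
  match lconf t v with
  | LInactive => if adv t.+1 v || heard t v then LActive 1 Beep true else LInactive
  | s => lstep s (heard t v) end.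
Proof. by []. Qed.

Lemma exists_cp x : x < T -> [exists c : 'I_T, C c && (x == c %% T)] = C x.
Proof.
move=> xT; apply/existsP/idP => [[c /andP[Cc /eqP ->]]|Cx].
- by rewrite modn_small.
- by exists (Ordinal xT); rewrite /= Cx /= modn_small.
Qed.

Lemma beeps_proj s : beeps (proj T s) = lbeeps s.
Proof. by case: s => [|K []]. Qed.

Lemma step_proj K st ind h :
  fs_step T C (Active (K %% T) st ind) h = proj T (lstep (LActive K st ind) h).
Proof.
have E1 : (K %% T).+1 %% T = K.+1 %% T by rewrite -addn1 modnDml addn1.
have E2 : (K %% T).+2 %% T = K.+2 %% T by rewrite -addn2 modnDml addn2.
case: st => /=; first by rewrite E1.
rewrite E1 exists_cp ?ltn_pmod //; last lia.
case: h => /=; first by case: (C _) => /=; rewrite ?E2 ?E1.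
by case: ifP => _ /=; rewrite ?E1.
Qed.

Lemma conf_proj t v : fs_conf e T C adv t v = proj T (lconf t v).
Proof.
have T1 : 1 %% T = 1 by rewrite modn_small //; lia.
elim: t v => [|t IH] v /=; first by case: (adv 0 v) => //=; rewrite T1.
have -> : [exists u, e v u && beeps (fs_conf e T C adv t u)] = heard t v.
  by apply: eq_existsb => u; rewrite IH beeps_proj.
rewrite IH; case: (lconf t v) => [|K st ind]; last exact: step_proj.
by rewrite /=; case: (_ || _) => //=; rewrite T1.
Qed.

(* The four possible moves of an active node: a beeper starts listening; a
   listener hearing a beep just before a checkpoint jumps over it and beeps
   (an induced beep); a listener fires spontaneously at a checkpoint it was
   induced to reach, or at 0; otherwise it just waits. *)
Variant lstep_spec (K : nat) (st : phase) (ind h : bool) : lstate -> Prop :=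
  | StepBeep of st = Beep : lstep_spec K st ind h (LActive K.+1 Listen ind)
  | StepJump of st = Listen & h & C (K.+1 %% T) :
      lstep_spec K st ind h (LActive K.+2 Beep true)
  | StepFire of st = Listen & ~~ h & (ind && C (K.+1 %% T)) || (K.+1 %% T == 0) :
      lstep_spec K st ind h (LActive K.+1 Beep false)
  | StepWait of st = Listen & ~~ (h && C (K.+1 %% T))
      & (~~ h -> ~~ ((ind && C (K.+1 %% T)) || (K.+1 %% T == 0))) :
      lstep_spec K st ind h (LActive K.+1 Listen ind).

Lemma lstepP K st ind h : lstep_spec K st ind h (lstep (LActive K st ind) h).
Proof.
case: st => /=; first exact: StepBeep.
case: h => /=.
- by case: ifP => hC; [exact: StepJump | apply: StepWait => //; rewrite hC].
- by case: ifP => hF; [exact: StepFire | apply: StepWait => // _; rewrite hF].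
Qed.

Lemma activeP t v K st ind : lconf t v = LActive K st ind ->
  lstep_spec K st ind (heard t v) (lconf t.+1 v).
Proof. by move=> Hv; rewrite lconfS Hv; apply: lstepP. Qed.

Lemma wake t v : lconf t v = LInactive ->
  lconf t.+1 v = LInactive \/ lconf t.+1 v = LActive 1 Beep true.
Proof. by move=> Hv; rewrite lconfS Hv; case: (_ || _); [right | left]. Qed.

Lemma inactive_before t v : lconf t.+1 v = LInactive -> lconf t v = LInactive /\ ~~ heard t v.
Proof.
rewrite lconfS; case: (lconf t v) => [|K st ind]; last by case: (lstepP K st ind (heard t v)).
by case: ifP => // /norP[_ ->].
Qed.

Lemma conf0 v : lconf 0 v = LInactive \/ lconf 0 v = LActive 1 Beep true.
Proof. by rewrite /=; case: (adv 0 v); [right | left]. Qed.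

Lemma heard_of t v u Ku iu : e v u -> lconf t u = LActive Ku Beep iu -> heard t v.
Proof. by move=> evu Hu; apply/existsP; exists u; rewrite evu Hu. Qed.

Lemma heardP t v : heard t v -> exists u Ku iu, e v u /\ lconf t u = LActive Ku Beep iu.
Proof.
case/existsP => u /andP[evu]; case Hu: (lconf t u) => [|Ku [] iu] //= _.
by exists u, Ku, iu.
Qed.

Lemma stay_active t v K st ind : lconf t v = LActive K st ind ->
  exists K' st' ind', lconf t.+1 v = LActive K' st' ind' /\ K.+1 <= K' <= K.+2.
Proof. by move/activeP; case=> *; do 3 eexists; (split; [reflexivity | lia]). Qed.

(* Global fact: a beeping node is at a checkpoint or one past it (after a jump),
   and exactly at one when its beep was spontaneous. *)
Definition beeps_at_cp (s : lstate) : Prop :=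
  if s is LActive K Beep ind then
    (C (K %% T) \/ C (K.-1 %% T)) /\ (ind = false -> C (K %% T))
  else True.

Lemma beeps_at_cp_all t v : beeps_at_cp (lconf t v).
Proof.
have C0 : C 0 by apply: cp0; lia.
have fresh : beeps_at_cp (LActive 1 Beep true) by rewrite /= mod0n; split; [right|].
case: t => [|t]; first by case: (conf0 v) => ->.
case Hv: (lconf t v) => [|K st ind]; first by case: (wake Hv) => ->.
case: (activeP Hv) => //= _ _ HC; first by split=> //; right.
by case/orP: HC => [/andP[_ HC]|/eqP ->]; split=> //; left.
Qed.

Lemma listening_before_cp t v K st ind : lconf t v = LActive K st ind ->
  C (K.+1 %% T) -> st = Listen.
Proof.
move=> Hv HC; case: st Hv => // Hv.
have := beeps_at_cp_all t v; rewrite Hv => -[Hb _].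
by exfalso; apply: (@cp_beep_gap T q K 1 _ _ Hb); rewrite ?addn1 //; lia.
Qed.

Lemma pulled_forward t u v Ku iu Kv sv iv : e v u ->
  lconf t u = LActive Ku Beep iu -> lconf t v = LActive Kv sv iv ->
  C (Kv.+1 %% T) -> lconf t.+1 v = LActive Kv.+2 Beep true.
Proof.
move=> evu Hu Hv HC; have hh := heard_of evu Hu.
by rewrite lconfS Hv (listening_before_cp Hv HC) /= hh HC.
Qed.

(* The inductive invariant.  A node activated in round 0 has counter t + 1 in
   round t; no counter ever exceeds it. *)
Definition counter_bound t (s : lstate) : Prop :=
  if s is LActive K _ _ then 0 < K <= t.+1 else True.

Definition border_fresh (su sv : lstate) : Prop :=
  sv = LInactive -> su = LInactive \/ su = LActive 1 Beep true.

Definition lag_ok (su sv : lstate) : Prop :=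
  if (su, sv) is (LActive Ku pu _, LActive Kv _ _) then
    Ku <= Kv.+1 \/ [/\ Ku = Kv.+2, pu = Beep & C (Kv.+1 %% T)]
  else True.

(* An idle listener (one whose last beep was spontaneous) is not ahead of
   any neighbour. *)
Definition idle_behind (su sv : lstate) : Prop :=
  if (su, sv) is (LActive Ku Listen false, LActive Kv _ _) then Ku <= Kv else True.

Definition leader_beeps (su sv : lstate) : Prop :=
  if (su, sv) is (LActive Ku pu _, LActive Kv _ _) then
    Ku = Kv.+1 -> C (Ku %% T) -> pu = Beep
  else True.

Record invariant t : Prop := Invariant {
  inv_bound : forall v, counter_bound t (lconf t v);
  inv_border : forall u v, e u v -> border_fresh (lconf t u) (lconf t v);
  inv_lag : forall u v, e u v -> lag_ok (lconf t u) (lconf t v);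
  inv_idle : forall u v, e u v -> idle_behind (lconf t u) (lconf t v);
  inv_leader : forall u v, e u v -> leader_beeps (lconf t u) (lconf t v) }.

Arguments inv_border [t] _ [u v].
Arguments inv_lag [t] _ [u v].
Arguments inv_idle [t] _ [u v].
Arguments inv_leader [t] _ [u v].

Section Preservation.
Variables (t : nat) (I : invariant t).

Lemma counter_range v K st ind : lconf t v = LActive K st ind -> 0 < K <= t.+1.
Proof. by move=> Hv; have := inv_bound I v; rewrite Hv. Qed.

Lemma beeper_ahead u v Ku iu Kv iv : e v u ->
  lconf t u = LActive Ku Beep iu -> lconf t v = LActive Kv Listen iv ->
  C (Kv.+1 %% T) -> Kv < Ku.
Proof.
move=> evu Hu Hv HC.
have := inv_lag I evu; rewrite Hv Hu /= => -[lag|[_ //]].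
have := beeps_at_cp_all t u; rewrite Hu => -[Hb _].
rewrite ltnNge; apply/negP => KuKv.
have [E|E] : Kv.+1 = Ku + 1 \/ Kv.+1 = Ku + 2 by lia.
- by apply: (@cp_beep_gap T q Ku 1 _ _ Hb); rewrite -?E //; lia.
- by apply: (@cp_beep_gap T q Ku 2 _ _ Hb); rewrite -?E //; lia.
Qed.

(* Counters grow by one, or by two in a jump, which only happens behind a
   beeping neighbour, itself within the bound. *)
Lemma boundS v : counter_bound t.+1 (lconf t.+1 v).
Proof.
case Hv: (lconf t v) => [|K st ind]; first by case: (wake Hv) => ->.
have hK := counter_range Hv.
case: (activeP Hv) => /= [_|sL hh HC|_ _ _|_ _ _]; try lia.
case: (heardP hh) => u [Ku [iu [evu Hu]]]; subst st.
by have := beeper_ahead evu Hu Hv HC; have := counter_range Hu; lia.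
Qed.

(* A node stays inactive only if no neighbour beeped, so its active
   neighbours were inactive before and are fresh now. *)
Lemma borderS u v : e u v -> border_fresh (lconf t.+1 u) (lconf t.+1 v).
Proof.
move=> euv /inactive_before [Hv nh].
case Hu: (lconf t u) => [|Ku su iu]; first exact: wake Hu.
have := inv_border I euv; rewrite Hu Hv => /(_ erefl) [//|[_ Es _]]; subst su.
have evu : e v u by rewrite esym.
by rewrite (heard_of evu Hu) in nh.
Qed.

(* Counters of neighbours: when u was one step ahead and jumps, v is left two
   steps behind exactly at the checkpoint u jumped over; when u was two steps
   ahead and beeping, v is pulled forward. *)
Lemma lagS u v : e u v -> lag_ok (lconf t.+1 u) (lconf t.+1 v).
Proof.
move=> euv; have evu : e v u by rewrite esym.
case Hu: (lconf t u) => [|Ku su iu].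
  by case: (wake Hu) => ->; case: (lconf t.+1 v) => //= *; left.
case Hv: (lconf t v) => [|Kv sv iv].
  have := inv_border I euv; rewrite Hu Hv => /(_ erefl) [//|[EK Es Ei]]; subst.
  by case: (activeP Hu) => // _; case: (wake Hv) => -> //=; left.
have hL := inv_lag I euv; rewrite Hu Hv /= in hL.
case: hL => [lag|[EK Es HC]]; last first.
  subst su; rewrite (pulled_forward evu Hu Hv HC).
  by case: (activeP Hu) => // _ /=; left; lia.
case: (stay_active Hv) => Kv' [sv' [iv' [-> bv]]].
have [ahead|level] : Ku = Kv.+1 \/ Ku <= Kv by lia.
- case: (activeP Hu) => /= [_|_ _ HC|_ _ _|_ _ _]; try by left; lia.
  have [->|->] : Kv' = Kv.+1 \/ Kv' = Kv.+2 by lia.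
  + by right; split=> //; [lia | rewrite -ahead].
  + by left; lia.
- by case: (stay_active Hu) => Ku' [su' [iu' [-> bu]]] /=; left; lia.
Qed.

(* A node that just beeped spontaneously was at a checkpoint, so no neighbour
   one step behind it can stay behind. *)
Lemma idleS u v : e u v -> idle_behind (lconf t.+1 u) (lconf t.+1 v).
Proof.
move=> euv; have evu : e v u by rewrite esym.
case Hu: (lconf t u) => [|Ku su iu]; first by case: (wake Hu) => ->.
case Hv: (lconf t v) => [|Kv sv iv].
  have := inv_border I euv; rewrite Hu Hv => /(_ erefl) [//|[_ Es Ei]]; subst.
  by case: (activeP Hu).
case: (stay_active Hv) => Kv' [sv' [iv' [Hv' bv]]]; rewrite Hv'.
case: (activeP Hu) => //= [sB|sL _ _]; case: iu Hu => //= Hu.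
- subst su; have := beeps_at_cp_all t u; rewrite Hu => -[_ /(_ erefl) CKu].
  have hL := inv_lag I euv; rewrite Hu Hv /= in hL.
  case: hL => [lag|[EK _ HC]]; last first.
    by exfalso; apply: (@cp_gap T q Kv.+1 1 HC); rewrite ?addn1 -?EK //; lia.
  rewrite /idle_behind /=; have [|ahead] := leqP Ku Kv; first lia.
  have EKu : Ku = Kv.+1 by lia.
  subst Ku; move: Hv'; rewrite (pulled_forward evu Hu Hv CKu) => -[<- _ _]; lia.
- by subst su; have := inv_idle I euv; rewrite Hu Hv /idle_behind /=; lia.
Qed.

(* A node that reaches a checkpoint one step ahead of a neighbour without
   beeping would have been an idle listener ahead of it. *)
Lemma leaderS u v : e u v -> leader_beeps (lconf t.+1 u) (lconf t.+1 v).
Proof.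
move=> euv.
case Hu: (lconf t u) => [|Ku su iu].
  by case: (wake Hu) => ->; case: (lconf t.+1 v).
have C0 : C 0 by apply: cp0; lia.
case Hv: (lconf t v) => [|Kv sv iv].
  have := inv_border I euv; rewrite Hu Hv => /(_ erefl) [//|[EK Es Ei]]; subst.
  case: (activeP Hu) => // _; case: (wake Hv) => -> //= _ C2.
  by exfalso; apply: (@cp_gap T q 0 2 _ C2); rewrite ?mod0n //; lia.
case: (stay_active Hv) => Kv' [sv' [iv' [-> bv]]].
case: (activeP Hu) => //= [sB|sL nj hw] EK HC.
- subst su; have := beeps_at_cp_all t u; rewrite Hu => -[Hb _].
  by exfalso; apply: (@cp_beep_gap T q Ku 1 _ _ Hb); rewrite ?addn1 //; lia.
- have nh : ~~ heard t u by move: nj; rewrite HC andbT.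
  move: (hw nh); rewrite HC andbT orbC => /norP[_ /negbTE Ei]; subst.
  by have := inv_idle I euv; rewrite Hu Hv /idle_behind /=; lia.
Qed.
End Preservation.

Lemma invariant0 : invariant 0.
Proof.
split=> [v|u v _|u v _|u v _|u v _]; first by case: (conf0 v) => ->.
all: case: (conf0 u) => ->; case: (conf0 v) => ->.
all: rewrite /border_fresh /lag_ok /idle_behind /leader_beeps //=.
all: by [left | right].
Qed.

Lemma invariant_all t : invariant t.
Proof.
elim: t => [|t I]; first exact: invariant0.
split; [exact: boundS | exact: borderS | exact: lagS | exact: idleS | exact: leaderS].
Qed.

Definition lag_bound t v l :=
  exists K st ind, lconf t v = LActive K st ind /\ t.+1 <= K + l.

Lemma lag_boundS t v l : lag_bound t v l -> lag_bound t.+1 v l.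
Proof.
case=> K [st [ind [Hv lag]]]; case: (stay_active Hv) => K' [st' [ind' [Hv' b]]].
by exists K', st', ind'; split=> //; lia.
Qed.

Lemma lag_bound_weaken t v l l' : l <= l' -> lag_bound t v l -> lag_bound t v l'.
Proof. by move=> ll' [K [st [ind [Hv lag]]]]; exists K, st, ind; split=> //; lia. Qed.

Lemma lag_exact t v : lag_bound t v 0 -> exists st ind, lconf t v = LActive t.+1 st ind.
Proof.
case=> K [st [ind [Hv lag]]]; have range := counter_range (invariant_all t) Hv.
have EK : K = t.+1 by lia.
by exists st, ind; rewrite -EK.
Qed.

Lemma origin_lag a t : adv 0 a -> lag_bound t a 0.
Proof.
move=> ha; elim: t => [|t IH]; last exact: lag_boundS.
by exists 1, Beep, true; rewrite /= ha.
Qed.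

Lemma lag_wake t u v : e v u -> lconf t u <> LInactive ->
  exists K st ind, lconf t.+1 v = LActive K st ind.
Proof.
move=> evu Hu; have euv : e u v by rewrite esym.
case Hv: (lconf t v) => [|K st ind]; last first.
  by case: (stay_active Hv) => K' [st' [ind' [-> _]]]; exists K', st', ind'.
have := inv_border (invariant_all t) euv; rewrite Hv => /(_ erefl) [//|Hu1].
by exists 1, Beep, true; rewrite lconfS Hv (heard_of evu Hu1) orbT.
Qed.

(* A node catches up to one step more than the lag of a neighbour: if it is
   further behind, the neighbour is two steps ahead and pulls it forward. *)
Lemma lag_catch_up t u v l : e v u -> lag_bound t u l -> lconf t v <> LInactive ->
  lag_bound t.+1 v l.+1.
Proof.
move=> evu [Ku [su [iu [Hu lagu]]]] Hv; have I := invariant_all t.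
case Hv': (lconf t v) Hv => [|Kv sv iv] // _.
have [ok|behind] := leqP t.+1 (Kv + l.+1).
  by apply: lag_boundS; exists Kv, sv, iv.
have euv : e u v by rewrite esym.
have hL := inv_lag I euv; rewrite Hu Hv' /= in hL.
case: hL => [|[EK Es HC]]; first lia.
subst su; exists Kv.+2, Beep, true; rewrite (pulled_forward evu Hu Hv' HC).
by split=> //; lia.
Qed.

(* At a checkpoint round, a node one step behind a neighbour at the reference
   clock catches up completely: that neighbour beeps and pulls it forward. *)
Lemma lag_close t u v : e v u -> lag_bound t u 0 -> lag_bound t v 1 ->
  C (t.+1 %% T) -> lag_bound t.+1 v 0.
Proof.
move=> evu /lag_exact [su [iu Hu]] [Kv [sv [iv [Hv lagv]]]] HC.
have I := invariant_all t; have euv : e u v by rewrite esym.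
have [ok|behind] := leqP t.+1 Kv.
  by apply: lag_boundS; exists Kv, sv, iv; split=> //; lia.
have EKv : Kv = t by lia.
subst Kv; have hL := inv_leader I euv; rewrite Hu Hv /= in hL.
have Es := hL erefl HC; subst su.
exists t.+2, Beep, true; rewrite (pulled_forward evu Hu Hv HC).
by split=> //; rewrite addn0.
Qed.

(* Lag d is reached as activation spreads (k = 0),
   one unit is gained per phase of q rounds (k < d), and the last unit at the
   checkpoint round wave_time d (k = d). *)
Lemma wave_progress a t v d k : adv 0 a -> within e d a v -> k <= d ->
  wave_time T q k + (d - k) <= t -> lag_bound t v (d - k).
Proof.
move=> ha; have hq1 : 1 < q by lia.
elim: t v d k => [|t IH] v d k Hw kd ht.
  have k0 : k = 0.
    by case: (posnP k) => // /(wave_time_gt T hq1); lia.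
  subst k; rewrite wave_time0 in ht; have d0 : d = 0 by lia.
  subst d; case: (within_step Hw) => [->|[u _ [_ //]]].
  exact: origin_lag.
have [earlier|] := leqP (wave_time T q k + (d - k)) t; first exact/lag_boundS/IH.
move=> now; have {now ht} Ht : wave_time T q k + (d - k) = t.+1 by lia.
case: (within_step Hw) => [Eva|[u euv [Hwu d0]]].
  by subst v; apply: lag_bound_weaken (origin_lag _ ha).
have evu : e v u by rewrite esym.
have [k0|kpos] := posnP k.
  subst k; rewrite wave_time0 subn0 in Ht *.
  have [Ku [su [iu [Hu _]]]] := IH u d.-1 0 Hwu (leq0n _) ltac:(rewrite wave_time0; lia).
  have [K [st [ind Hv]]] : exists K st ind, lconf t.+1 v = LActive K st ind.
    by apply: (lag_wake evu); rewrite Hu.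
  have := counter_range (invariant_all t.+1) Hv.
  by exists K, st, ind; split=> //; lia.
have kt := wave_time_gt T hq1 kpos.
have [lt_kd|eq_kd] : k < d \/ k = d by lia.
  have Hv := IH v d 0 Hw (leq0n _) ltac:(rewrite wave_time0; lia).
  have Hu := IH u d.-1 k Hwu ltac:(lia) ltac:(lia).
  have -> : d - k = (d.-1 - k).+1 by lia.
  apply: (lag_catch_up evu Hu).
  by case: Hv => K [st [ind [-> _]]].
subst k; rewrite subnn addn0 in Ht *.
have step := wave_time_step T d.-1 hq1; rewrite prednK // Ht in step.
have Hu := IH u d.-1 d.-1 Hwu (leqnn _) ltac:(lia); rewrite subnn in Hu.
have Hv := IH v d d.-1 Hw ltac:(lia) ltac:(lia).
have E1 : d - d.-1 = 1 by lia.
rewrite E1 in Hv.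
by apply: (lag_close evu Hu Hv); rewrite -Ht; apply: wave_time_cp; lia.
Qed.

Lemma wave_complete a t v d : adv 0 a -> within e d a v -> wave_time T q d <= t ->
  exists st ind, lconf t v = LActive t.+1 st ind.
Proof.
move=> ha Hw ht; apply: lag_exact; rewrite -(subnn d).
by apply: (wave_progress ha Hw (leqnn d)); rewrite subnn addn0.
Qed.

End Execution.

Theorem mainTheorem2 (T q : nat) (V : finType) (e : rel V) (D : nat)
    (adv : nat -> V -> bool) :
  5 <= T -> 5 <= q -> q <= T ->
  simple_graph e -> is_diameter e D ->
  (exists v, adv 0 v) ->
  forall t, q * D + (D %/ (T %/ q)) * (T %% q) <= t ->
    exists d, forall v, clock (fs_conf e T (CPq T q) adv t v) = Some d.
Proof.
move=> _ q5 qT [esym _] [diam _] [a ha] t ht.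
have hq : 3 < q by lia.
exists (t.+1 %% T) => v.
have [st [ind Hv]] : exists st ind, lconf T q e adv t v = LActive t.+1 st ind.
  by apply: (wave_complete hq qT esym ha (diam a v)); rewrite /wave_time mulnC.
by rewrite (conf_proj e adv hq qT) Hv.
Qed.
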